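(* Let $k\ge1$, $D_k=3k^2+3k+1$, and let $c\in P_k$. Then the set $c+V(T_{D_k})=\{c+a\alpha_1+b\alpha_2 : 0\le b\le a\le D_k\}$ contains exactly $\dfrac{D_k+5}{2}$ points of $P_k$.
   Context: Let $\alpha_1=(1,0)$ and $\alpha_2=(-\tfrac12,\tfrac{\sqrt3}{2})$. The triangular lattice $T_\infty$ is the infinite graph with vertex set $\{a\alpha_1+b\alpha_2 : a,b\in\mathbb Z\}$, two vertices being adjacent iff their Euclidean distance is $1$. For $d\ge0$, $T_d$ is the subgraph of $T_\infty$ induced by the vertices $a\alpha_1+b\alpha_2$ with $0\le b\le a\le d$. For $k\ge 1$, let $D_k=3k^2+3k+1$ and let $P_k$ (the pattern $P_{k+1,1}$) be the sublattice $\{x\,u+y\,v : x,y\in\mathbb Z\}$ of the vertex set of $T_\infty$, where $u=(2k+1)\alpha_1+k\alpha_2$ and $v=(k+1)\alpha_1+(2k+1)\alpha_2$ ($v$ is $u$ rotated by $60^\circ$). Consecutive points of $P_k$ along any of the three lattice directions are at distance $D_k$; in particular if $c\in P_k$ then the three corners $c$, $c+D_k\alpha_1$, $c+D_k(\alpha_1+\alpha_2)$ of $c+V(T_{D_k})$ lie in $P_k$. *)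

(* A vertex a*alpha1 + b*alpha2 of the triangular lattice is
   represented by its integer coordinate pair (a, b) : int * int
   (alpha1, alpha2 are linearly independent, so this is a bijection). *)
From HB Require Import structures.
From mathcomp Require Import all_boot all_order all_algebra.
Set Implicit Arguments. Unset Strict Implicit. Unset Printing Implicit Defensive.
Import Order.TTheory GRing.Theory Num.Theory.
Local Open Scope ring_scope.

Definition Dk (k : nat) : nat := (3 * k ^ 2 + 3 * k + 1)%N.

Definition u_k (k : nat) : int * int := ((2 * k + 1)%:Z, k%:Z).
Definition v_k (k : nat) : int * int := ((k + 1)%:Z, (2 * k + 1)%:Z).

Definition inPk (k : nat) (p : int * int) : Prop :=
  exists x y : int,
    p = (x * (u_k k).1 + y * (v_k k).1, x * (u_k k).2 + y * (v_k k).2).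

Definition inT (d : nat) (a b : int) : Prop := 0 <= b /\ b <= a /\ a <= d%:Z.

Definition shift (c : int * int) (a b : int) : int * int := (c.1 + a, c.2 + b).

(* P_k is the set of (a, b) with D | (2k+1)a + (3k^2+2k)b, D = D_k.  Among
   the offsets 0 <= a, b <= D, each column b meets this kernel exactly once
   with a < D, and once more at a = D iff b = 0 or b = D: D + 3 points in all.
   The diagonal a = b meets it only at the two corners, and the reflection
   (a, b) |-> (D - a, D - b) exchanges the parts below and above the diagonal,
   so the triangle b <= a holds ((D + 3) + 2) / 2 of them. *)

From mathcomp Require Import all_boot all_order all_algebra.
From mathcomp Require Import zify ring.
Import Order.TTheory GRing.Theory Num.Theory.

Lemma coprime_dvd_mulS m n d : d %| m * n + 1 -> coprime m d.
Proof.
move=> dvd_d; rewrite /coprime -dvdn1.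
have g_dvd_mn : gcdn m d %| m * n by rewrite dvdn_mulr ?dvdn_gcdl.
by rewrite -(dvdn_addr 1 g_dvd_mn) (dvdn_trans (dvdn_gcdr m d)).
Qed.

Lemma dvdn_le_id d m : m <= d -> (d %| m) = (m == 0) || (m == d).
Proof.
move=> le_md; apply/idP/orP => [d_m | [] /eqP ->]; rewrite ?dvdn0 ?dvdnn //.
have [-> | m_gt0] := posnP m; first by left.
by right; rewrite eqn_leq le_md dvdn_leq.
Qed.

Lemma sum_ends n : 0 < n -> \sum_(i < n.+1) ((i == 0 :> nat) || (i == n :> nat)) = 2.
Proof.
case: n => // n _.
rewrite -(big_mkord xpredT (fun i => nat_of_bool ((i == 0) || (i == n.+1)))).
rewrite big_nat_recr //= big_nat_recl //= big1_seq ?eqxx ?orbT //.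
by move=> i /andP [_]; rewrite mem_index_iota => /andP [_ lt_in]; case: eqP; lia.
Qed.

Section LatticeTriangle.

Variables D p q : nat.
Hypotheses (D_gt0 : 0 < D) (p_coprime : coprime p D) (q_coprime : coprime q D)
  (pq_coprime : coprime (p + q) D).

Definition on_lattice a b := D %| p * a + q * b.

Lemma on_lattice0l b : b <= D -> on_lattice 0 b = (b == 0) || (b == D).
Proof.
by move=> le_bD; rewrite /on_lattice muln0 add0n Gauss_dvdr 1?coprime_sym ?dvdn_le_id.
Qed.

Lemma on_latticeDl b : on_lattice D b = on_lattice 0 b.
Proof. by rewrite /on_lattice muln0 add0n dvdn_addr // dvdn_mull. Qed.

Lemma on_lattice_diag a : a <= D -> on_lattice a a = (a == 0) || (a == D).
Proof.
by move=> le_aD; rewrite /on_lattice -mulnDl Gauss_dvdr 1?coprime_sym ?dvdn_le_id.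
Qed.

Lemma on_lattice_opp a b : a <= D -> b <= D -> on_lattice (D - a) (D - b) = on_lattice a b.
Proof.
move=> le_aD le_bD; apply: dvdn_add_eq.
by rewrite !mulnBr addnACA !subnK ?leq_mul2l ?le_aD ?le_bD ?orbT // -mulnDl dvdn_mull.
Qed.

Lemma on_lattice_inj (a a' : 'I_D) b : on_lattice a b -> on_lattice a' b -> a = a'.
Proof.
wlog le_a'a : a a' / a' <= a.
  move=> sym hit_a hit_a'; case: (leqP a' a) => [le | /ltnW le]; first exact: sym.
  exact/esym/sym.
move=> hit_a hit_a'.
have : D %| p * (a - a') by rewrite mulnBr -(subnDr (q * b)) dvdn_sub.
have lt_aD := ltn_ord a.
rewrite Gauss_dvdr 1?coprime_sym // dvdn_le_id; last by lia.
by case/orP=> /eqP ?; last lia; apply: val_inj => /=; lia.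
Qed.

Lemma sum_on_lattice_column b : \sum_(a < D) on_lattice a b = 1.
Proof.
have [u _] := Bezoutl p D_gt0; rewrite gcdnC (eqP p_coprime) => dvd_Sup.
pose a0 := Ordinal (ltn_pmod (u * q * b) D_gt0).
have hit_a0 : on_lattice a0 b.
  rewrite /on_lattice /= /dvdn -modnDml modnMmr modnDml -/(dvdn _ _).
  have -> : p * (u * q * b) + q * b = (1 + u * p) * (q * b) by nia.
  exact: dvdn_mulr.
rewrite -(eq_card1 (x := a0) (A := fun a => on_lattice a b)).
  rewrite -sum1_card [RHS]big_mkcond; apply: eq_bigr => a _.
  by rewrite unfold_in /=; case: on_lattice.
by move=> a; rewrite unfold_in /=; apply/idP/eqP => [/on_lattice_inj/(_ hit_a0) | ->].
Qed.

Lemma sum_on_lattice_square :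
  \sum_(a < D.+1) \sum_(b < D.+1) on_lattice a b = D + 3.
Proof.
rewrite exchange_big (eq_bigr (fun b : 'I_D.+1 => 1 + on_lattice 0 b)) => [|b _]; last first.
  by rewrite big_ord_recr /= sum_on_lattice_column on_latticeDl.
rewrite big_split /= sum1_card card_ord.
suff -> : \sum_(b < D.+1) on_lattice 0 b = 2 by rewrite addSnnS.
by rewrite -[RHS](sum_ends _ D_gt0); apply: eq_bigr => b _; rewrite on_lattice0l // -ltnS.
Qed.

Lemma sum_on_lattice_diag : \sum_(a < D.+1) on_lattice a a = 2.
Proof.
by rewrite -[RHS](sum_ends _ D_gt0); apply: eq_bigr => a _; rewrite on_lattice_diag // -ltnS.
Qed.

Local Notation lower := (\sum_(a < D.+1) \sum_(b < D.+1) ((b <= a) && on_lattice a b)).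
Local Notation upper := (\sum_(a < D.+1) \sum_(b < D.+1) ((a <= b) && on_lattice a b)).

Lemma lower_add_upper : lower + upper =
  \sum_(a < D.+1) \sum_(b < D.+1) on_lattice a b + \sum_(a < D.+1) on_lattice a a.
Proof.
rewrite -!big_split /=; apply: eq_bigr => a _.
rewrite -big_split /= (bigD1 a) // [in RHS](bigD1 a) //= leqnn addnAC.
congr (_ + _ + _); apply: eq_bigr => b ne_ba.
by case: on_lattice; rewrite ?andbF ?andbT //; move: ne_ba; rewrite -val_eqE; case: ltngtP.
Qed.

Lemma upper_eq_lower : upper = lower.
Proof.
rewrite (reindex_inj rev_ord_inj); apply: eq_bigr => a _.
rewrite (reindex_inj rev_ord_inj); apply: eq_bigr => b _ /=.
have le_aD : a <= D by rewrite -ltnS.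
have le_bD : b <= D by rewrite -ltnS.
by rewrite !subSS on_lattice_opp // leq_sub2lE.
Qed.

Definition lattice_triangle : pred ('I_D.+1 * 'I_D.+1) :=
  [pred ab : 'I_D.+1 * 'I_D.+1 | (ab.2 <= ab.1) && on_lattice ab.1 ab.2].

Theorem card_lattice_triangle : #|lattice_triangle| = (D + 5) %/ 2.
Proof.
have -> : #|lattice_triangle| = lower.
  rewrite -sum1_card pair_big big_mkcond /=.
  by apply: eq_bigr => -[a b] _; rewrite unfold_in /=; case: (_ && _).
have := lower_add_upper.
by rewrite upper_eq_lower sum_on_lattice_square sum_on_lattice_diag; lia.
Qed.

End LatticeTriangle.

Section LatticePk.

Variable k : nat.
Local Notation D := (Dk k).
Local Notation p := (2 * k + 1)%N.
Local Notation q := (3 * k ^ 2 + 2 * k)%N.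

Lemma Dk_gt0 : 0 < D.
Proof. by rewrite /Dk addn1. Qed.

Lemma coprime_Dk_coefs : [/\ coprime p D, coprime q D & coprime (p + q) D].
Proof.
split.
- by apply: (@coprime_dvd_mulS _ (3 * p)); apply/dvdnP; exists 4; rewrite /Dk; lia.
- apply: (@coprime_dvd_mulS _ (D - 3 * k)); apply/dvdnP; exists (D - 4 * k).
  by rewrite /Dk; nia.
- apply: (@coprime_dvd_mulS _ (3 * k + 3)); apply/dvdnP; exists (3 * k + 4).
  by rewrite /Dk; nia.
Qed.

Local Open Scope ring_scope.
Local Notation kz := (k%:Z).

Lemma nat_coefsE : [/\ p%:Z = 2 * kz + 1, q%:Z = 3 * kz ^+ 2 + 2 * kz,
  (k + 1)%N%:Z = kz + 1 & D%:Z = 3 * kz ^+ 2 + 3 * kz + 1].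
Proof. by rewrite /Dk -[(k ^ 2)%N]/(k * k)%N !(PoszD, PoszM) expr2. Qed.

(* The form is det((a, b), v) = (2k+1)a - (k+1)b with D b added, so that its
   coefficients are natural numbers. *)
Lemma inPkE (a b : int) :
  inPk k (a, b) <-> (D%:Z %| (2 * kz + 1) * a + (3 * kz ^+ 2 + 2 * kz) * b)%Z.
Proof.
rewrite /inPk /u_k /v_k /=; have [-> _ -> ->] := nat_coefsE.
split=> [[x [y [-> ->]]] | /dvdzP [n ell_eq]].
  by apply/dvdzP; exists (x * (kz + 1) + y * (2 * kz + 1)); ring.
set ell := _ + _ in ell_eq; pose E := n * (3 * kz ^+ 2 + 3 * kz + 1) - ell.
have E0 : E = 0 by rewrite /E ell_eq subrr.
(* Cramer's rule: x = ((2k+1)a - (k+1)b) / D = n - b and y = ((2k+1)b - ka) / D,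
   the latter divided using the inverse -3k of k+1 modulo D. *)
pose x := n - b.
exists x, ((2 * kz + 1) * b - kz * a - 3 * kz * (a - (2 * kz + 1) * x)); congr pair.
- by rewrite -[LHS]addr0 -(mulr0 (2 * kz + 1)) -E0 /E /ell /x; ring.
- by rewrite -[LHS]addr0 -(mulr0 (4 * kz)) -E0 /E /ell /x; ring.
Qed.

Lemma inPk_shift c a b : inPk k c -> inPk k (shift c a b) <-> inPk k (a, b).
Proof.
by case: c => c1 c2; rewrite /shift /= !inPkE => c_in; rewrite !mulrDr addrACA rpredDl.
Qed.

Lemma inPk_nat (a b : nat) : inPk k (a%:Z, b%:Z) <-> on_lattice D p q a b.
Proof.
rewrite inPkE; have [<- <- _ _] := nat_coefsE.
by rewrite /on_lattice -!PoszM -PoszD dvdzE !absz_nat.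
Qed.

Lemma Pk_shifted_triangleP c z : inPk k c ->
  (inPk k z /\ exists a b : int, inT D a b /\ z = shift c a b) <->
  exists2 ab, ab \in lattice_triangle D p q & z = shift c (ab.1 : nat)%:Z (ab.2 : nat)%:Z.
Proof.
move=> c_in; split=> [[z_in [a [b [[b_ge0 [le_ba le_aD]] def_z]]]] | [[a b] ab_in ->]].
- case: b b_ge0 le_ba def_z => // b _; case: a le_aD => // a le_aD le_ba def_z.
  rewrite lez_nat -ltnS in le_aD; rewrite lez_nat in le_ba.
  have lt_bD := leq_ltn_trans le_ba le_aD.
  exists (Ordinal le_aD, Ordinal lt_bD) => //.
  by rewrite unfold_in /= le_ba; apply/inPk_nat; rewrite -(inPk_shift _ _ _ c_in) -def_z.
- rewrite unfold_in /= in ab_in; case/andP: ab_in => le_ba on_ab.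
  split; first exact/(inPk_shift _ _ _ c_in)/inPk_nat.
  by exists a, b; rewrite /inT !lez_nat le_ba -[(a <= D)%N]ltnS ltn_ord.
Qed.

End LatticePk.

Theorem lemma1 (k : nat) (c : int * int) :
  (1 <= k)%N -> inPk k c ->
  exists s : seq (int * int),
    [/\ uniq s,
        (forall p : int * int,
           p \in s <-> (inPk k p /\ exists a b : int, inT (Dk k) a b /\ p = shift c a b))
      & size s = ((Dk k + 5) %/ 2)%N].
Proof.
move=> _ c_in.
have [p_coprime q_coprime pq_coprime] := coprime_Dk_coefs k.
pose T := lattice_triangle (Dk k) (2 * k + 1) (3 * k ^ 2 + 2 * k).
pose pt (ab : 'I_(Dk k).+1 * 'I_(Dk k).+1) := shift c (ab.1 : nat)%:Z (ab.2 : nat)%:Z.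
exists [seq pt ab | ab <- enum T]; split.
- rewrite map_inj_uniq ?enum_uniq // => -[a b] [a' b'] [/addrI [eq_a] /addrI [eq_b]].
  by congr pair; apply: val_inj.
- move=> z; rewrite (Pk_shifted_triangleP _ _ _ c_in).
  split=> [/mapP [ab ab_in ->] | [ab ab_in ->]]; first by rewrite mem_enum in ab_in; exists ab.
  by apply/mapP; exists ab; rewrite ?mem_enum.
- by rewrite size_map -cardE card_lattice_triangle ?Dk_gt0.
Qed.
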